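(* Let $f \in \mathcal{H}$ be such that $f(t)/t^{-n} \to 0$ as $t\to\infty$ for every $n \in \mathbb{N}$. Then for all $\ell, n \in \mathbb{N}$ we have $f^{(\ell)}(t)/t^{-n} \to 0$ as $t \to\infty$.
   Context: $\mathcal{H}$ denotes the union of all Hardy fields, where a Hardy field is a subfield of the ring of germs at $+\infty$ of real-valued functions defined on half-lines $(c,\infty)$ which is closed under differentiation (so every element of $\mathcal{H}$ is eventually infinitely differentiable and its derivatives lie in $\mathcal{H}$). *)

From Stdlib Require Import Reals.
From Coquelicot Require Import Coquelicot.
Open Scope R_scope.

Definition ev_eq (f g : R -> R) : Prop :=
  exists c : R, forall t, c < t -> f t = g t.

(* A Hardy field, represented as a set H of representatives of germs at +oo
   (closed under equality of germs), forming a subfield of the ring of germs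
   and closed under differentiation. *)
Record hardy_field (H : (R -> R) -> Prop) : Prop := {
  hf_germ  : forall f g, H f -> ev_eq f g -> H g;
  hf_zero  : H (fun _ => 0);
  hf_one   : H (fun _ => 1);
  hf_add   : forall f g, H f -> H g -> H (fun t => f t + g t);
  hf_opp   : forall f, H f -> H (fun t => - f t);
  hf_mul   : forall f g, H f -> H g -> H (fun t => f t * g t);
  hf_inv   : forall f, H f -> ~ ev_eq f (fun _ => 0) ->
               exists g, H g /\ ev_eq (fun t => f t * g t) (fun _ => 1);
  hf_deriv : forall f, H f ->
               (exists c : R, forall t, c < t -> ex_derive f t) /\ H (Derive f)
}.

Definition in_hardy (f : R -> R) : Prop :=
  exists H, hardy_field H /\ H f.

From Stdlib Require Import Reals Lra Classical.
From Coquelicot Require Import Coquelicot.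
Open Scope R_scope.

(* If g = o(t^-n) for every n and g lies in a Hardy field, then g'' is
   eventually of constant sign, so g' is eventually monotone; as g -> 0 this
   forces |g'| to be eventually nonincreasing.  The mean value theorem on
   [t/2, t] then gives |g'(t)| t/2 <= |g(t)| + |g(t/2)|, so g' = o(t^-n) for
   every n as well, and the claim follows by induction on the order of the
   derivative. *)

Lemma is_lim_half : is_lim (fun t => t / 2) p_infty p_infty.
Proof.
  apply is_lim_spec. intros M. exists (2 * M). intros t Ht. lra.
Qed.

Lemma is_lim_0_abs_le (h k : R -> R) :
  Rbar_locally p_infty (fun t => Rabs (h t) <= k t) ->
  is_lim k p_infty 0 -> is_lim h p_infty 0.
Proof.
  intros Hle Hk.
  apply (is_lim_le_le_loc (fun t => - k t) k).
  - apply (filter_imp _ _ (fun t Ht => proj1 (Rabs_le_between _ _) Ht) Hle).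
  - replace (Finite 0) with (Rbar_opp 0) by (simpl; f_equal; ring).
    now apply is_lim_opp.
  - exact Hk.
Qed.

Lemma continuity_pt_ex_derive u t : ex_derive u t -> continuity_pt u t.
Proof.
  intros Du. apply continuity_pt_filterlim.
  apply (ex_derive_continuous (K := R_AbsRing) (V := R_NormedModule)), Du.
Qed.

Lemma MVT_Derive u a b :
  a < b -> (forall x, a <= x <= b -> ex_derive u x) ->
  exists x, a <= x <= b /\ u b - u a = Derive u x * (b - a).
Proof.
  intros ab Du.
  destruct (MVT_cor2 u (Derive u) a b ab) as [x [E Hx]].
  - intros x Hx. apply is_derive_Reals, Derive_correct, Du, Hx.
  - exists x. split; [lra | exact E].
Qed.

Lemma Derive_nonneg_nondecreasing u c :
  (forall t, c < t -> ex_derive u t) -> (forall t, c < t -> 0 <= Derive u t) ->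
  forall s t, c < s -> s <= t -> u s <= u t.
Proof.
  intros Du Hpos s t cs st.
  destruct (Req_dec s t) as [<- | ne]; [lra|].
  destruct (MVT_Derive u s t) as [x [Hx E]]; [lra | intros x Hx; apply Du; lra|].
  assert (0 <= Derive u x * (t - s)) by (apply Rmult_le_pos; [apply Hpos | ]; lra).
  lra.
Qed.

(* A function tending to 0 cannot have a nondecreasing derivative that is
   ever positive: it would then grow at least linearly. *)
Lemma nondecreasing_Derive_nonpos g c :
  (forall t, c < t -> ex_derive g t) ->
  (forall s t, c < s -> s <= t -> Derive g s <= Derive g t) ->
  is_lim g p_infty 0 -> forall t, c < t -> Derive g t <= 0.
Proof.
  intros Dg Hmono Hlim t0 ct0.
  apply Rnot_lt_le. intros Hpos.
  apply is_lim_spec in Hlim. destruct (Hlim (mkposreal 1 Rlt_0_1)) as [M HM]. simpl in HM.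
  set (T := Rmax M t0 + (1 + Rabs (g t0)) / Derive g t0 + 1).
  assert (Hq : 0 <= (1 + Rabs (g t0)) / Derive g t0).
  { apply Rle_mult_inv_pos; [pose proof (Rabs_pos (g t0)); lra | exact Hpos]. }
  assert (MT : M < T) by (unfold T; pose proof (Rmax_l M t0); lra).
  assert (t0T : t0 + (1 + Rabs (g t0)) / Derive g t0 < T)
    by (unfold T; pose proof (Rmax_r M t0); lra).
  destruct (MVT_Derive g t0 T) as [x [Hx E]]; [lra | intros x Hx; apply Dg; lra|].
  assert (Hgrow : 1 + Rabs (g t0) <= Derive g x * (T - t0)).
  { apply Rle_trans with (Derive g t0 * (T - t0)).
    - replace (1 + Rabs (g t0)) with (Derive g t0 * ((1 + Rabs (g t0)) / Derive g t0))
        by (field; lra).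
      apply Rmult_le_compat_l; lra.
    - apply Rmult_le_compat_r; [lra | apply Hmono; lra]. }
  specialize (HM T MT). rewrite Rminus_0_r in HM.
  pose proof (Rle_abs (g T)). pose proof (Rle_abs (- g t0)). rewrite Rabs_Ropp in *.
  lra.
Qed.

Lemma convex_abs_Derive_nonincreasing g c :
  (forall t, c < t -> ex_derive g t) -> (forall t, c < t -> ex_derive (Derive g) t) ->
  (forall t, c < t -> 0 <= Derive (Derive g) t) -> is_lim g p_infty 0 ->
  forall s t, c < s -> s <= t -> Rabs (Derive g t) <= Rabs (Derive g s).
Proof.
  intros Dg Dg' Hconv Hlim s t cs st.
  pose proof (Derive_nonneg_nondecreasing _ c Dg' Hconv) as Hmono.
  pose proof (nondecreasing_Derive_nonpos g c Dg Hmono Hlim) as Hneg.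
  rewrite (Rabs_left1 _ (Hneg t ltac:(lra))), (Rabs_left1 _ (Hneg s cs)).
  specialize (Hmono s t cs st). lra.
Qed.

Lemma concave_abs_Derive_nonincreasing g c :
  (forall t, c < t -> ex_derive g t) -> (forall t, c < t -> ex_derive (Derive g) t) ->
  (forall t, c < t -> Derive (Derive g) t <= 0) -> is_lim g p_infty 0 ->
  forall s t, c < s -> s <= t -> Rabs (Derive g t) <= Rabs (Derive g s).
Proof.
  intros Dg Dg' Hconc Hlim s t cs st.
  set (h := fun t => - g t).
  assert (Dh : forall t, Derive h t = - Derive g t) by (intros; apply Derive_opp).
  assert (Dh' : forall t, Derive (Derive h) t = - Derive (Derive g) t).
  { intros x. rewrite (Derive_ext _ _ x Dh). apply Derive_opp. }
  rewrite <- (Rabs_Ropp (Derive g t)), <- (Rabs_Ropp (Derive g s)), <- !Dh.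
  apply (convex_abs_Derive_nonincreasing h c); auto.
  - intros x Hx. apply (ex_derive_opp (K := R_AbsRing) (V := R_NormedModule)), Dg, Hx.
  - intros x Hx. apply (ex_derive_ext (fun t => - Derive g t)); [intros; now rewrite Dh|].
    apply (ex_derive_opp (K := R_AbsRing) (V := R_NormedModule)), Dg', Hx.
  - intros x Hx. rewrite Dh'. specialize (Hconc x Hx). lra.
  - replace (Finite 0) with (Rbar_opp 0) by (simpl; f_equal; ring).
    now apply is_lim_opp.
Qed.

Lemma eventually_abs_Derive_nonincreasing (g : R -> R) :
  Rbar_locally p_infty (ex_derive g) -> Rbar_locally p_infty (ex_derive (Derive g)) ->
  Rbar_locally p_infty (fun t => 0 <= Derive (Derive g) t) \/
  Rbar_locally p_infty (fun t => Derive (Derive g) t <= 0) ->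
  is_lim g p_infty 0 ->
  Rbar_locally p_infty
    (fun s => forall t, s <= t -> Rabs (Derive g t) <= Rabs (Derive g s)).
Proof.
  intros Dg Dg' Hsign Hlim.
  destruct Hsign as [Hsign | Hsign];
    destruct (filter_and _ _ (filter_and _ _ Dg Dg') Hsign) as [c Hc];
    exists c; intros s cs t st.
  - apply (convex_abs_Derive_nonincreasing g c); auto; intros x Hx; apply Hc, Hx.
  - apply (concave_abs_Derive_nonincreasing g c); auto; intros x Hx; apply Hc, Hx.
Qed.

Lemma Derive_half_interval_bound g t :
  0 < t -> (forall x, t / 2 <= x <= t -> ex_derive g x) ->
  (forall x, t / 2 <= x <= t -> Rabs (Derive g t) <= Rabs (Derive g x)) ->
  Rabs (Derive g t) * (t / 2) <= Rabs (g t) + Rabs (g (t / 2)).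
Proof.
  intros tpos Dg Hmono.
  destruct (MVT_Derive g (t / 2) t) as [x [Hx E]]; [lra | exact Dg|].
  apply Rle_trans with (Rabs (g t - g (t / 2))).
  - rewrite E, Rabs_mult, (Rabs_right (t - t / 2)) by lra.
    replace (t - t / 2) with (t / 2) by field.
    apply Rmult_le_compat_r; [lra | apply Hmono, Hx].
  - unfold Rminus. rewrite <- (Rabs_Ropp (g (t / 2))). apply Rabs_triang.
Qed.

Lemma Derive_pow_bound g n t :
  2 <= t -> (forall x, t / 2 <= x <= t -> ex_derive g x) ->
  (forall x, t / 2 <= x <= t -> Rabs (Derive g t) <= Rabs (Derive g x)) ->
  Rabs (Derive g t * t ^ n) <=
  Rabs (g t * t ^ n) + 2 ^ n * Rabs (g (t / 2) * (t / 2) ^ n).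
Proof.
  intros t2 Dg Hmono.
  assert (Hbound := Derive_half_interval_bound g t ltac:(lra) Dg Hmono).
  assert (tn : 0 < t ^ n) by (apply pow_lt; lra).
  assert (E : 2 ^ n * (t / 2) ^ n = t ^ n)
    by (rewrite <- Rpow_mult_distr; f_equal; field).
  rewrite !Rabs_mult, (Rabs_right (t ^ n)), (Rabs_right ((t / 2) ^ n)) by
    (apply Rle_ge, pow_le; lra).
  replace (2 ^ n * (Rabs (g (t / 2)) * (t / 2) ^ n)) with (Rabs (g (t / 2)) * t ^ n)
    by (rewrite <- E; ring).
  rewrite <- Rmult_plus_distr_r.
  apply Rmult_le_compat_r; [lra|].
  pose proof (Rabs_pos (Derive g t)).
  apply Rle_trans with (Rabs (Derive g t) * (t / 2)); [|exact Hbound].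
  rewrite <- (Rmult_1_r (Rabs (Derive g t))) at 1.
  apply Rmult_le_compat_l; lra.
Qed.

Definition rapidly_decreasing (g : R -> R) : Prop :=
  forall n : nat, is_lim (fun t => g t * t ^ n) p_infty 0.

Lemma rapidly_decreasing_iff_div g :
  rapidly_decreasing g <->
  forall n : nat, is_lim (fun t => g t / / t ^ n) p_infty 0.
Proof.
  assert (E : forall n t, g t / / t ^ n = g t * t ^ n).
  { intros n t. unfold Rdiv. now rewrite Rinv_inv. }
  split; intros Hg n.
  - apply (is_lim_ext (fun t => g t * t ^ n)); [intros t; now rewrite E | apply Hg].
  - apply (is_lim_ext (fun t => g t / / t ^ n)); [apply E | apply Hg].
Qed.

Lemma rapidly_decreasing_is_lim_0 g : rapidly_decreasing g -> is_lim g p_infty 0.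
Proof.
  intros Hg. apply (is_lim_ext (fun t => g t * t ^ 0)); [intros t; simpl; ring|].
  apply Hg.
Qed.

Lemma rapidly_decreasing_Derive (g : R -> R) :
  Rbar_locally p_infty (ex_derive g) ->
  Rbar_locally p_infty
    (fun s => forall t, s <= t -> Rabs (Derive g t) <= Rabs (Derive g s)) ->
  rapidly_decreasing g -> rapidly_decreasing (Derive g).
Proof.
  intros Dg Hmono Hdec n.
  destruct (filter_and _ _ Dg Hmono) as [c Hc].
  apply (is_lim_0_abs_le _
    (fun t => Rabs (g t * t ^ n) + 2 ^ n * Rabs (g (t / 2) * (t / 2) ^ n))).
  - exists (Rmax 2 (2 * c)). intros t Ht.
    pose proof (Rmax_l 2 (2 * c)). pose proof (Rmax_r 2 (2 * c)).
    apply Derive_pow_bound; [lra | intros x Hx; apply Hc; lra |].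
    intros x Hx. apply Hc; lra.
  - replace (Finite 0) with (Finite (Rabs 0 + 2 ^ n * Rabs 0))
      by (simpl; f_equal; rewrite Rabs_R0; ring).
    apply is_lim_plus'; [apply (is_lim_Rabs _ _ 0), Hdec|].
    apply (is_lim_scal_l _ _ _ (Rabs 0)), (is_lim_Rabs _ _ 0).
    apply (is_lim_comp (fun u => g u * u ^ n) (fun t => t / 2) p_infty 0 p_infty).
    + apply Hdec.
    + apply is_lim_half.
    + exists 0. intros t _. discriminate.
Qed.

Lemma continuous_nonvanishing_constant_sign g c :
  (forall t, c < t -> continuity_pt g t) -> (forall t, c < t -> g t <> 0) ->
  (forall t, c < t -> 0 < g t) \/ (forall t, c < t -> g t < 0).
Proof.
  intros Cg NZg.
  assert (no_sign_change : forall a b, c < a -> c < b -> g a < 0 -> 0 < g b -> False).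
  { intros a b ca cb ga gb.
    destruct (Rlt_or_le a b) as [ab | ba].
    - destruct (Ranalysis5.IVT_interv g a b) as [z [Hz Ez]]; auto.
      + intros x Hx. apply Cg. lra.
      + apply (NZg z); [lra | exact Ez].
    - destruct (Req_dec a b) as [<- | ne]; [lra|].
      destruct (Ranalysis5.IVT_interv (fun x => - g x) b a) as [z [Hz Ez]]; try lra.
      + intros x Hx. apply continuity_pt_opp, Cg. lra.
      + apply (NZg z); lra. }
  assert (c1 : c < c + 1) by lra.
  destruct (Rdichotomy _ _ (NZg _ c1)) as [neg | pos]; [right | left]; intros t ct;
    destruct (Rdichotomy _ _ (NZg t ct)) as [Ht | Ht]; auto; exfalso.
  - exact (no_sign_change (c + 1) t c1 ct neg Ht).
  - exact (no_sign_change t (c + 1) ct c1 Ht pos).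
Qed.

(* A germ that is not eventually 0 is invertible, hence eventually nonzero;
   being differentiable it is eventually continuous, so it cannot change sign. *)
Lemma hardy_field_eventually_sign H g :
  hardy_field H -> H g ->
  Rbar_locally p_infty (fun t => 0 <= g t) \/ Rbar_locally p_infty (fun t => g t <= 0).
Proof.
  intros hH Hg.
  destruct (classic (ev_eq g (fun _ => 0))) as [[c Hc] | nz].
  { left. exists c. intros t ct. rewrite Hc by exact ct. lra. }
  destruct (hf_inv H hH g Hg nz) as [inv_g [_ Hinv]].
  destruct (hf_deriv H hH g Hg) as [Dg _].
  destruct (filter_and (F := Rbar_locally p_infty) _ _ Hinv Dg) as [c Hc].
  destruct (continuous_nonvanishing_constant_sign g c) as [pos | neg].
  - intros t ct. apply continuity_pt_ex_derive, Hc, ct.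
  - intros t ct E. destruct (Hc t ct) as [Ht _]. rewrite E in Ht. lra.
  - left. exists c. intros t ct. apply Rlt_le, pos, ct.
  - right. exists c. intros t ct. apply Rlt_le, neg, ct.
Qed.

Lemma hardy_field_rapidly_decreasing_Derive H g :
  hardy_field H -> H g -> rapidly_decreasing g -> rapidly_decreasing (Derive g).
Proof.
  intros hH Hg Hdec.
  destruct (hf_deriv H hH g Hg) as [Dg Hg'].
  destruct (hf_deriv H hH _ Hg') as [Dg' Hg''].
  apply rapidly_decreasing_Derive; [exact Dg | | exact Hdec].
  apply eventually_abs_Derive_nonincreasing; auto.
  - apply (hardy_field_eventually_sign H); auto.
  - apply rapidly_decreasing_is_lim_0, Hdec.
Qed.

Lemma hardy_field_rapidly_decreasing_Derive_n H g l :
  hardy_field H -> H g -> rapidly_decreasing g ->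
  H (Derive_n g l) /\ rapidly_decreasing (Derive_n g l).
Proof.
  intros hH Hg Hdec. induction l as [| l [Hl Hdec_l]]; [now split|]. split.
  - apply (hf_deriv H hH _ Hl).
  - apply (hardy_field_rapidly_decreasing_Derive H); assumption.
Qed.

Theorem lemma2p5 (f : R -> R) :
  in_hardy f ->
  (forall n : nat, is_lim (fun t => f t / / (t ^ n)) p_infty 0) ->
  forall l n : nat, is_lim (fun t => Derive_n f l t / / (t ^ n)) p_infty 0.
Proof.
  intros [H [hH Hf]] Hdec l.
  apply rapidly_decreasing_iff_div.
  apply (hardy_field_rapidly_decreasing_Derive_n H f l hH Hf).
  now apply rapidly_decreasing_iff_div.
Qed.
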